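(* Consider the proportional mechanism with $n=2$ agents and total budget $B$ equal to the cost constant $C$ (where $C>0$). For every $\epsilon>0$ there exists a type profile $(q_1,q_2)$ with $0<q_1\le q_2$ such that for every pure Nash equilibrium $(x_1^{\mathrm{prop}},x_2^{\mathrm{prop}})$ of the proportional mechanism and every optimal solution $(f,x_1^*,x_2^* )$ of the reward-design problem (both defined in the context, with these $q_1,q_2$, $B=C$), we have \[\frac{x_1^{\mathrm{prop}}+x_2^{\mathrm{prop}}}{x_1^*+x_2^*}\le \epsilon.\]
   Context: There are $n$ agents; agent $i$ has type $q_i>0$ (the best quality it can produce), with $0<q_1\le\cdots\le q_n$. Agent $i$ chooses a quality $x_i\in[0,q_i]$ and incurs cost $x_iC/q_i$, where $C>0$ is a constant. $B>0$ is the budget. Proportional mechanism: agent $i$'s utility is $u_i(x_i,x_{-i})=\dfrac{x_iB}{\sum_{j=1}^n x_j}-\dfrac{x_iC}{q_i}$, with the convention that $u_i=0$ when all $x_j=0$. A pure Nash equilibrium is a profile $(x_1,\dots,x_n)$ with $x_i\in[0,q_i]$ such that no agent can increase its utility by unilaterally changing $x_i$ within $[0,q_i]$. Reward-design problem: a reward function is a map $f:[0,\infty)\to[0,\infty)$; agent $i$'s utility is $u_i(x)=f(x)-xC/q_i$. A pair $(f,x_1^*,\dots,x_n^* )$ is feasible if for each $i$: $0\le x_i^*\le q_i$ and $u_i(x_i^* )\ge u_i(x)$ for all $x\in[0,q_i]$ (incentive constraint), and $\sum_{i=1}^n f(x_i^* )\le B$ (budget constraint). The problem is to maximize $\sum_{i=1}^n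 x_i^*$ over feasible $(f,x^* )$; an optimal solution is a feasible pair attaining the maximum. *)

From Stdlib Require Import Reals List ClassicalDescription.
Open Scope R_scope.

Definition sum_agents (n : nat) (g : nat -> R) : R :=
  fold_right Rplus 0 (map g (seq 0 n)).

Definition upd (x : nat -> R) (i : nat) (y : R) : nat -> R :=
  fun j => if Nat.eqb j i then y else x j.

Definition prop_utility (n : nat) (B C : R) (q x : nat -> R) (i : nat) : R :=
  if excluded_middle_informative (forall j, (j < n)%nat -> x j = 0)
  then 0
  else x i * B / sum_agents n x - x i * C / q i.

Definition prop_nash (n : nat) (B C : R) (q x : nat -> R) : Prop :=
  (forall i, (i < n)%nat -> 0 <= x i <= q i) /\
  (forall i, (i < n)%nat -> forall y, 0 <= y <= q i ->
      prop_utility n B C q (upd x i y) i <= prop_utility n B C q x i).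

(* Feasible pair (f, xs) of the reward-design problem;
   f : [0,oo) -> [0,oo) is represented by f : R -> R nonnegative on [0,oo)
   (its values on negative reals are irrelevant). *)
Definition rd_feasible (n : nat) (B C : R) (q : nat -> R) (f : R -> R)
    (xs : nat -> R) : Prop :=
  (forall z, 0 <= z -> 0 <= f z) /\
  (forall i, (i < n)%nat ->
     0 <= xs i <= q i /\
     (forall z, 0 <= z <= q i -> f (xs i) - xs i * C / q i >= f z - z * C / q i)) /\
  sum_agents n (fun i => f (xs i)) <= B.

Definition rd_optimal (n : nat) (B C : R) (q : nat -> R) (f : R -> R)
    (xs : nat -> R) : Prop :=
  rd_feasible n B C q f xs /\
  forall (g : R -> R) (ys : nat -> R), rd_feasible n B C q g ys ->
    sum_agents n ys <= sum_agents n xs.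

Definition prof2 (a b : R) : nat -> R := fun i => match i with O => a | _ => b end.

(** Take types [q1 = 1] and [q2 = 1 + 1/eps] with [B = C].  In an equilibrium
    of the proportional mechanism the low type must be active (an agent alone
    would halve its effort), and an active agent [i] only accepts the
    equilibrium if its share [B x_i / S] covers its cost [C x_i / q_i], i.e.
    [S <= B q_i / C = 1].  The linear reward [f z = z C / q2] makes the high
    type indifferent, so it may produce [q2] at total cost [C = B]: the optimum
    is at least [q2], and the ratio is at most [1 / q2 <= eps]. *)
From Stdlib Require Import Reals Lra Lia List ClassicalDescription.
Open Scope R_scope.

Lemma fold_right_Rplus_init (a : R) (l : list R) :
  fold_right Rplus a l = fold_right Rplus 0 l + a.
Proof. induction l as [|b l IH]; simpl; [ring | rewrite IH; ring]. Qed.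

Lemma sum_agents_S (n : nat) (g : nat -> R) :
  sum_agents (S n) g = sum_agents n g + g n.
Proof.
  unfold sum_agents.
  rewrite seq_S, map_app, fold_right_app; simpl.
  rewrite fold_right_Rplus_init; ring.
Qed.

Lemma sum_agents_two (g : nat -> R) : sum_agents 2 g = g 0%nat + g 1%nat.
Proof. unfold sum_agents; simpl; ring. Qed.

Lemma sum_agents_nonneg (n : nat) (g : nat -> R) :
  (forall j, (j < n)%nat -> 0 <= g j) -> 0 <= sum_agents n g.
Proof.
  induction n as [|n IH]; intros Hg; [unfold sum_agents; simpl; lra|].
  rewrite sum_agents_S.
  assert (0 <= sum_agents n g) by (apply IH; intros j Hj; apply Hg; lia).
  assert (0 <= g n) by (apply Hg; lia).
  lra.
Qed.

Lemma sum_agents_ge_term (n : nat) (g : nat -> R) (i : nat) :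
  (forall j, (j < n)%nat -> 0 <= g j) -> (i < n)%nat -> g i <= sum_agents n g.
Proof.
  induction n as [|n IH]; intros Hg Hi; [lia|].
  rewrite sum_agents_S.
  assert (Hn : 0 <= g n) by (apply Hg; lia).
  destruct (Nat.eq_dec i n) as [->|Hin].
  - assert (0 <= sum_agents n g) by (apply sum_agents_nonneg; intros j Hj; apply Hg; lia).
    lra.
  - assert (g i <= sum_agents n g) by (apply IH; [intros j Hj; apply Hg|]; lia).
    lra.
Qed.

Lemma sum_agents_zero (n : nat) (g : nat -> R) :
  (forall j, (j < n)%nat -> g j = 0) -> sum_agents n g = 0.
Proof.
  induction n as [|n IH]; intros Hg; [reflexivity|].
  rewrite sum_agents_S, IH by (intros j Hj; apply Hg; lia).
  rewrite Hg by lia; ring.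
Qed.

Lemma sum_agents_single (n : nat) (g : nat -> R) (i : nat) :
  (i < n)%nat -> (forall j, (j < n)%nat -> j <> i -> g j = 0) ->
  sum_agents n g = g i.
Proof.
  induction n as [|n IH]; intros Hi Hg; [lia|].
  rewrite sum_agents_S.
  destruct (Nat.eq_dec i n) as [->|Hin].
  - rewrite sum_agents_zero by (intros j Hj; apply Hg; lia); ring.
  - rewrite IH by (try intros j Hj Hji; try apply Hg; lia).
    rewrite (Hg n) by lia; ring.
Qed.

Lemma upd_same (x : nat -> R) (i : nat) (y : R) : upd x i y i = y.
Proof. unfold upd; rewrite Nat.eqb_refl; reflexivity. Qed.

Lemma upd_other (x : nat -> R) (i j : nat) (y : R) : j <> i -> upd x i y j = x j.
Proof. intros Hji; unfold upd; apply Nat.eqb_neq in Hji; rewrite Hji; reflexivity. Qed.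

Lemma prop_utility_active (n : nat) (B C : R) (q x : nat -> R) (i : nat) :
  (i < n)%nat -> x i <> 0 ->
  prop_utility n B C q x i = x i * B / sum_agents n x - x i * C / q i.
Proof.
  intros Hi Hx; unfold prop_utility.
  destruct (excluded_middle_informative _) as [Hall|]; [|reflexivity].
  exfalso; exact (Hx (Hall i Hi)).
Qed.

Lemma prop_utility_upd_0 (n : nat) (B C : R) (q x : nat -> R) (i : nat) :
  prop_utility n B C q (upd x i 0) i = 0.
Proof.
  unfold prop_utility.
  destruct (excluded_middle_informative _); [reflexivity|].
  rewrite upd_same; unfold Rdiv; ring.
Qed.

Section ProportionalNash.

Variables (n : nat) (B C : R) (q x : nat -> R).
Hypothesis (Hnash : prop_nash n B C q x) (HC : 0 < C).

Lemma prop_nash_nonneg (j : nat) : (j < n)%nat -> 0 <= x j.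
Proof. intros Hj; apply (proj1 Hnash j Hj). Qed.

(* Dropping out yields utility 0, so an active agent's share covers its cost. *)
Lemma prop_nash_active_sum_le (i : nat) :
  (i < n)%nat -> 0 < q i -> 0 < x i -> sum_agents n x <= B * q i / C.
Proof.
  intros Hi Hq Hx.
  assert (Hdrop := proj2 Hnash i Hi 0 ltac:(lra)).
  rewrite prop_utility_upd_0, prop_utility_active in Hdrop by (auto; lra).
  assert (HS : x i <= sum_agents n x)
    by (apply sum_agents_ge_term; [exact prop_nash_nonneg | exact Hi]).
  set (S := sum_agents n x) in *.
  assert (Hcost : C * S <= B * q i).
  { replace (C * S) with (x i * C / q i * (S * q i / x i)) by (field; lra).
    replace (B * q i) with (x i * B / S * (S * q i / x i)) by (field; lra).
    apply Rmult_le_compat_r; [|lra].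
    unfold Rdiv; apply Rmult_le_pos; [apply Rmult_le_pos|]; try lra.
    apply Rlt_le, Rinv_0_lt_compat; exact Hx. }
  apply (Rmult_le_reg_r C); [exact HC|].
  replace (B * q i / C * C) with (B * q i) by (field; lra); lra.
Qed.

Lemma prop_nash_lone_inactive (i : nat) :
  (i < n)%nat -> 0 < q i -> (forall j, (j < n)%nat -> j <> i -> x j = 0) ->
  x i = 0.
Proof.
  intros Hi Hq Hothers.
  destruct (Req_dec (x i) 0) as [|Hx]; [assumption|exfalso].
  assert (Hpos : 0 < x i) by (pose proof (prop_nash_nonneg i Hi); lra).
  assert (Hqi : x i <= q i) by apply (proj1 Hnash i Hi).
  assert (Hhalf := proj2 Hnash i Hi (x i / 2) ltac:(lra)).
  rewrite !prop_utility_active in Hhalf by (rewrite ?upd_same; auto; lra).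
  rewrite !(sum_agents_single n _ i Hi) in Hhalf
    by (intros j Hj Hji; rewrite ?upd_other; auto).
  rewrite upd_same in Hhalf.
  replace (x i / 2 * B / (x i / 2)) with B in Hhalf by (field; lra).
  replace (x i * B / x i) with B in Hhalf by (field; lra).
  assert (0 < x i * C / q i) by (unfold Rdiv; apply Rmult_lt_0_compat;
    [apply Rmult_lt_0_compat | apply Rinv_0_lt_compat]; lra).
  replace (x i / 2 * C / q i) with (x i * C / q i / 2) in Hhalf by (field; lra).
  lra.
Qed.

End ProportionalNash.

Lemma prop_nash_two_sum_le (B C : R) (q x : nat -> R) :
  prop_nash 2 B C q x -> 0 <= B -> 0 < C -> 0 < q 0%nat -> 0 < q 1%nat ->
  x 0%nat + x 1%nat <= B * q 0%nat / C.
Proof.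
  intros Hnash HB HC Hq0 Hq1.
  destruct (Req_dec (x 0%nat) 0) as [H0|H0].
  - assert (H1 : x 1%nat = 0).
    { apply (prop_nash_lone_inactive 2 B C q x Hnash HC 1); [lia | exact Hq1|].
      intros j Hj Hj1; replace j with 0%nat by lia; exact H0. }
    rewrite H0, H1, Rplus_0_r.
    unfold Rdiv; apply Rmult_le_pos; [apply Rmult_le_pos; lra|].
    apply Rlt_le, Rinv_0_lt_compat, HC.
  - rewrite <- sum_agents_two.
    apply (prop_nash_active_sum_le 2 B C q x Hnash HC 0); [lia | exact Hq0|].
    pose proof (prop_nash_nonneg 2 B C q x Hnash 0 ltac:(lia)); lra.
Qed.

Lemma rd_feasible_linear_reward (B C q1 q2 : R) :
  0 < q1 <= q2 -> 0 < C <= B ->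
  rd_feasible 2 B C (prof2 q1 q2) (fun z => z * C / q2) (prof2 0 q2).
Proof.
  intros Hq HC.
  assert (Hiq : / q2 <= / q1) by (apply Rinv_le_contravar; lra).
  assert (0 < / q2) by (apply Rinv_0_lt_compat; lra).
  split; [|split].
  - intros z Hz; unfold Rdiv; apply Rmult_le_pos; [apply Rmult_le_pos|]; lra.
  - intros i Hi; destruct i as [|[|i]]; [| |lia]; simpl; split; try lra.
    + intros z Hz; unfold Rdiv.
      assert (0 <= z * C * (/ q1 - / q2)) by (apply Rmult_le_pos; [apply Rmult_le_pos|]; lra).
      lra.
    + intros z Hz; lra.
  - rewrite sum_agents_two; simpl.
    replace (0 * C / q2 + q2 * C / q2) with C by (field; lra); lra.
Qed.

Lemma rd_optimal_two_sum_ge (B C q1 q2 : R) (f : R -> R) (xs : nat -> R) :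
  0 < q1 <= q2 -> 0 < C <= B -> rd_optimal 2 B C (prof2 q1 q2) f xs ->
  q2 <= xs 0%nat + xs 1%nat.
Proof.
  intros Hq HC [_ Hopt].
  assert (Hlin := Hopt _ _ (rd_feasible_linear_reward B C q1 q2 Hq HC)).
  rewrite !sum_agents_two in Hlin; simpl in Hlin; lra.
Qed.

Theorem theorem1 :
  forall C : R, 0 < C ->
  forall eps : R, 0 < eps ->
  exists q1 q2 : R, 0 < q1 <= q2 /\
    forall xp : nat -> R, prop_nash 2 C C (prof2 q1 q2) xp ->
    forall (f : R -> R) (xs : nat -> R), rd_optimal 2 C C (prof2 q1 q2) f xs ->
      (xp 0%nat + xp 1%nat) / (xs 0%nat + xs 1%nat) <= eps.
Proof.
  intros C HC eps Heps.
  assert (Hieps : 0 < / eps) by (apply Rinv_0_lt_compat; exact Heps).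
  exists 1, (1 + / eps); split; [lra|].
  intros xp Hnash f xs Hopt.
  assert (Hprop : xp 0%nat + xp 1%nat <= 1).
  { assert (Hle := prop_nash_two_sum_le C C _ xp Hnash
                      ltac:(lra) HC ltac:(simpl; lra) ltac:(simpl; lra)).
    simpl in Hle; replace (C * 1 / C) with 1 in Hle by (field; lra); exact Hle. }
  assert (Hprop0 : 0 <= xp 0%nat + xp 1%nat).
  { pose proof (prop_nash_nonneg 2 C C _ xp Hnash 0 ltac:(lia)).
    pose proof (prop_nash_nonneg 2 C C _ xp Hnash 1 ltac:(lia)).
    lra. }
  assert (Hopt_ge := rd_optimal_two_sum_ge C C 1 (1 + / eps) f xs
                       ltac:(lra) ltac:(lra) Hopt).
  apply Rle_trans with (1 / (1 + / eps)).
  - unfold Rdiv; apply Rmult_le_compat; try lra.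
    + apply Rlt_le, Rinv_0_lt_compat; lra.
    + apply Rinv_le_contravar; lra.
  - replace (1 / (1 + / eps)) with (eps / (eps + 1)) by (field; lra).
    assert (/ (eps + 1) <= 1) by (rewrite <- Rinv_1; apply Rinv_le_contravar; lra).
    unfold Rdiv; nra.
Qed.
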